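(* Let $Q$ be an $[[n,k,d]]$ stabilizer code with codespace projector $P_Q$ whose Shor–Laflamme enumerators satisfy $A_{2i+1}=0$ for all $i$. Then $$\sum_{i=0}^n i\cdot 3^{-i}A_i\le\frac n4\,\frac{2^{n-k}}{3^n}\,B_n.$$
   Context: For an $[[n,k,d]]$ stabilizer code with projector $P_Q$ onto its $2^k$-dimensional codespace, the Shor–Laflamme enumerators are $A_i=\frac{1}{2^{2k}}\sum_{\sigma:w(\sigma)=i}\mathrm{Tr}[\sigma P_Q]\mathrm{Tr}[\sigma^\dagger P_Q]$ and $B_i=\frac{1}{2^k}\sum_{\sigma:w(\sigma)=i}\mathrm{Tr}[\sigma P_Q\sigma^\dagger P_Q]$, where $\sigma$ ranges over the $n$-qubit Pauli operators $\{\mathbb{1},X,Y,Z\}^{\otimes n}$ and $w(\sigma)$ is the number of non-identity tensor factors. *)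

From mathcomp Require Import all_boot all_order all_algebra all_field.
Set Implicit Arguments. Unset Strict Implicit. Unset Printing Implicit Defensive.
Import Order.TTheory GRing.Theory Num.Theory.
Local Open Scope ring_scope.

(* n-qubit Pauli strings: each factor coded as 0 = 1, 1 = X, 2 = Y, 3 = Z. *)
Definition pstring (n : nat) := {ffun 'I_n -> 'I_4}.

Definition wt n (s : pstring n) : nat := #|[set j | s j != ord0]|.

(* k-th bit of a computational basis index i of (C^2)^{\otimes n} *)
Definition qbit n (i : 'I_(2 ^ n)) (k : 'I_n) : bool := odd (i %/ 2 ^ k).

Definition pauli1 (p : 'I_4) (a b : bool) : algC :=
  match val p with
  | 0 => (a == b)%:R
  | 1 => (a != b)%:R
  | 2 => if a == b then 0 else if a then 'i else - 'i
  | _ => if a == b then (if a then -1 else 1) else 0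
  end.

(* the tensor product sigma_1 (x) ... (x) sigma_n, as a 2^n x 2^n matrix *)
Definition pauli_mx n (s : pstring n) : 'M[algC]_(2 ^ n) :=
  \matrix_(i, j) \prod_(k < n) pauli1 (s k) (qbit i k) (qbit j k).

Definition adjmx m (A : 'M[algC]_m) : 'M[algC]_m := (map_mx Num.conj A)^T.

(* Hermitian Pauli group elements (+/-) sigma; the bool is the sign (true = -). *)
Definition signed_mx n (s : bool * pstring n) : 'M[algC]_(2 ^ n) :=
  (-1) ^+ s.1 *: pauli_mx s.2.

Definition is_stabilizer_group n k (S : {set bool * pstring n}) : Prop :=
  [/\ (k <= n)%N,
      (false, [ffun=> ord0]) \in S,
      (true, [ffun=> ord0]) \notin S,
      (forall s t, s \in S -> t \in S ->
          exists2 u, u \in S & signed_mx s *m signed_mx t = signed_mx u)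
    & (forall s t, s \in S -> t \in S ->
          signed_mx s *m signed_mx t = signed_mx t *m signed_mx s)]
  /\ #|S| = (2 ^ (n - k))%N.

Definition code_projector n k (S : {set bool * pstring n}) : 'M[algC]_(2 ^ n) :=
  ((2 ^ (n - k))%:R)^-1 *: \sum_(s in S) signed_mx s.

Definition SL_A n k (P : 'M[algC]_(2 ^ n)) (i : nat) : algC :=
  ((2 ^ (2 * k))%:R)^-1 *
  \sum_(s : pstring n | wt s == i)
     \tr (pauli_mx s *m P) * \tr (adjmx (pauli_mx s) *m P).

Definition SL_B n k (P : 'M[algC]_(2 ^ n)) (i : nat) : algC :=
  ((2 ^ k)%:R)^-1 *
  \sum_(s : pstring n | wt s == i)
     \tr (pauli_mx s *m P *m adjmx (pauli_mx s) *m P).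

From mathcomp Require Import all_boot all_order all_algebra all_field.
From mathcomp Require Import ring zify.
Import Order.TTheory GRing.Theory Num.Theory.
Set Implicit Arguments. Unset Strict Implicit. Unset Printing Implicit Defensive.
Local Open Scope ring_scope.

(* Pauli strings are trace-orthogonal and P = 2^-(n-k) sum_(u in S) u, so tr(sigma_s P)
   vanishes unless s is the string of an element of S: A_i counts the elements of S of
   weight i.  Conjugation by sigma_s multiplies u in S by the sign chi_s(u) = +/-1 telling
   whether they commute; chi_s is a character of S, so sum_(u in S) chi_s(u) is |S| or 0,
   and B_j = 2^-(n-k) sum_(wt s = j) sum_(u in S) chi_s(u).  For strings of weight n and
   n - 1 the sum over s factors qubit by qubit: B_n is proportional to
   sum_u (-1/3)^wt(u), and 0 <= B_(n-1) is proportional to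
   sum_u (-1/3)^wt(u) (n - 4 wt(u)).  Since A vanishes in odd weights, the signs
   (-1)^wt(u) are all 1 and the latter is the inequality. *)

Lemma eq_nat_bits n a b : (a < 2 ^ n)%N -> (b < 2 ^ n)%N ->
  (forall k, (k < n)%N -> odd (a %/ 2 ^ k) = odd (b %/ 2 ^ k)) -> a = b.
Proof.
elim: n a b => [|n IHn] a b ltan ltbn eq_bits.
  by move: ltan ltbn; rewrite expn0 !ltnS !leqn0 => /eqP-> /eqP->.
have eq_half : a./2 = b./2.
  rewrite -!divn2; apply: IHn; rewrite ?ltn_divLR -?expnSr //.
  by move=> k ltkn; rewrite -!divnMA -expnS; apply: eq_bits.
have := eq_bits 0%N isT; rewrite expn0 !divn1 => eq_odd.
by rewrite -[a]odd_double_half -[b]odd_double_half eq_odd eq_half.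
Qed.

Lemma qbit_inj n (i j : 'I_(2 ^ n)) : (forall k, qbit i k = qbit j k) -> i = j.
Proof.
move=> eq_bits; apply/val_inj/(eq_nat_bits (ltn_ord i) (ltn_ord j)) => k ltkn.
exact: (eq_bits (Ordinal ltkn)).
Qed.

Definition qbits n (i : 'I_(2 ^ n)) : {ffun 'I_n -> bool} := [ffun k => qbit i k].

Lemma qbits_bij n : bijective (@qbits n).
Proof.
apply: inj_card_bij; last by rewrite card_ffun card_bool !card_ord.
by move=> i j /ffunP eq_ij; apply: qbit_inj => k; have := eq_ij k; rewrite !ffunE.
Qed.

Section TensorProduct.
Variable R : comPzRingType.

Lemma sum_prod_qbit n (F : 'I_n -> bool -> R) :
  \sum_(i < 2 ^ n) \prod_(k < n) F k (qbit i k) = \prod_(k < n) \sum_(c : bool) F k c.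
Proof.
rewrite bigA_distr_bigA (reindex (@qbits n)) /=; last exact/onW_bij/qbits_bij.
by apply: eq_bigr => i _; apply: eq_bigr => k _; rewrite ffunE.
Qed.

Definition tensor_mx n (F : 'I_n -> bool -> bool -> R) : 'M[R]_(2 ^ n) :=
  \matrix_(i, j) \prod_(k < n) F k (qbit i k) (qbit j k).

Lemma eq_tensor_mx n (F G : 'I_n -> bool -> bool -> R) :
  (forall k a b, F k a b = G k a b) -> tensor_mx F = tensor_mx G.
Proof. by move=> eqFG; apply/matrixP => i j; rewrite !mxE; apply: eq_bigr. Qed.

Lemma tensor_mxM n (F G : 'I_n -> bool -> bool -> R) :
  tensor_mx F *m tensor_mx G =
  tensor_mx (fun k a b => \sum_(c : bool) F k a c * G k c b).
Proof.
apply/matrixP => i j; rewrite !mxE -(sum_prod_qbit (fun k c => F k _ c * G k c _)).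
by apply: eq_bigr => l _; rewrite !mxE -big_split.
Qed.

Lemma mxtrace_tensor n (F : 'I_n -> bool -> bool -> R) :
  \tr (tensor_mx F) = \prod_(k < n) \sum_(c : bool) F k c c.
Proof.
by rewrite -(sum_prod_qbit (fun k c => F k c c)); apply: eq_bigr => i _; rewrite mxE.
Qed.

Lemma tensor_mxZ n (c : 'I_n -> R) (F : 'I_n -> bool -> bool -> R) :
  tensor_mx (fun k a b => c k * F k a b) = (\prod_(k < n) c k) *: tensor_mx F.
Proof. by apply/matrixP => i j; rewrite !mxE big_split. Qed.

Lemma prodr_eq_ffun (I : finType) (T : eqType) (f g : {ffun I -> T}) :
  \prod_(i : I) ((f i == g i)%:R : R) = (f == g)%:R.
Proof.
have [<-|neq_fg] := eqVneq f g; first by apply: big1 => i _; rewrite eqxx.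
have [i neq_i] : exists i, f i != g i.
  apply/existsP; apply: contraR neq_fg => /existsPn eq_fg.
  by apply/eqP/ffunP => i; apply/eqP/negPn/eq_fg.
by rewrite (bigD1 i) //= (negbTE neq_i) mul0r.
Qed.

Lemma tensor_mx1 n : tensor_mx (fun (k : 'I_n) (a b : bool) => (a == b)%:R) = 1%:M.
Proof.
apply/matrixP => i j; rewrite !mxE.
rewrite (eq_bigr (fun k => (qbits i k == qbits j k)%:R)) => [|k _]; last by rewrite !ffunE.
by rewrite prodr_eq_ffun (bij_eq (qbits_bij n)).
Qed.

End TensorProduct.

Definition pauli1_sign (a b : 'I_4) : algC :=
  if (val a == 0%N) || (val b == 0%N) || (a == b) then 1 else -1.

Ltac case_I4 x := let m := fresh in let lt_m := fresh in
  case: x => [[|[|[|[|m]]]] lt_m] //.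

Lemma pauli1_mul_trace (x y : 'I_4) :
  \sum_(a : bool) \sum_(c : bool) pauli1 x a c * pauli1 y c a = (x == y)%:R * 2.
Proof.
have := @mulCii algC; rewrite !big_bool; case_I4 x; case_I4 y.
all: rewrite /pauli1 /= => ii; ring: ii.
Qed.

Lemma pauli1_sq (x : 'I_4) (a b : bool) :
  \sum_(c : bool) pauli1 x a c * pauli1 x c b = (a == b)%:R.
Proof.
have := @mulCii algC; rewrite big_bool; case_I4 x; case: a; case: b.
all: rewrite /pauli1 /= => ii; ring: ii.
Qed.

Lemma pauli1_conj (x y : 'I_4) (a b : bool) :
  \sum_(c : bool) (\sum_(c' : bool) pauli1 x a c' * pauli1 y c' c) * pauli1 x c b
  = pauli1_sign x y * pauli1 y a b.
Proof.
have := @mulCii algC; rewrite !big_bool; case_I4 x; case_I4 y; case: a; case: b.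
all: rewrite /pauli1_sign /pauli1 /= => ii; ring: ii.
Qed.

Lemma pauli1_adj (x : 'I_4) (a b : bool) : (pauli1 x b a)^* = pauli1 x a b.
Proof.
case_I4 x; case: a; case: b.
all: by rewrite /pauli1 /= ?(rmorph0, rmorph1, rmorphN1, conjCi) // -conjCi conjCK.
Qed.

Definition pauli_sign n (s t : pstring n) : algC :=
  \prod_(k < n) pauli1_sign (s k) (t k).

Lemma pauli_sign_sqr n (s t : pstring n) : pauli_sign s t ^+ 2 = 1.
Proof.
rewrite -prodrXl; apply: big1 => k _; rewrite /pauli1_sign.
by case: ifP; rewrite ?sqrrN expr1n.
Qed.

Lemma pauli_mx_tensor n (s : pstring n) :
  pauli_mx s = tensor_mx (fun k => pauli1 (s k)).
Proof. by []. Qed.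

Lemma pauli_mx0 n : pauli_mx ([ffun=> ord0] : pstring n) = 1%:M.
Proof.
by rewrite pauli_mx_tensor -tensor_mx1; apply: eq_tensor_mx => k a b; rewrite ffunE.
Qed.

Lemma mxtrace_pauliM n (s t : pstring n) :
  \tr (pauli_mx s *m pauli_mx t) = (s == t)%:R * (2 ^ n)%:R.
Proof.
rewrite !pauli_mx_tensor tensor_mxM mxtrace_tensor.
under eq_bigr do rewrite pauli1_mul_trace.
by rewrite big_split /= prodr_eq_ffun prodr_const card_ord natrX.
Qed.

Lemma pauli_mx_sq n (s : pstring n) : pauli_mx s *m pauli_mx s = 1%:M.
Proof.
rewrite !pauli_mx_tensor tensor_mxM -tensor_mx1.
by apply: eq_tensor_mx => k; apply: pauli1_sq.
Qed.

Lemma pauli_mx_conj n (s t : pstring n) :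
  pauli_mx s *m pauli_mx t *m pauli_mx s = pauli_sign s t *: pauli_mx t.
Proof.
rewrite !pauli_mx_tensor !tensor_mxM -tensor_mxZ.
by apply: eq_tensor_mx => k; apply: pauli1_conj.
Qed.

Lemma adjmx_pauli n (s : pstring n) : adjmx (pauli_mx s) = pauli_mx s.
Proof.
apply/matrixP => i j; rewrite !mxE rmorph_prod.
by apply: eq_bigr => k _; apply: pauli1_adj.
Qed.

Lemma natr_exp2_neq0 n : ((2 ^ n)%:R : algC) != 0.
Proof. by rewrite pnatr_eq0 expn_eq0. Qed.

Lemma mxtrace_signedM n (u v : bool * pstring n) :
  \tr (signed_mx u *m signed_mx v) =
  (-1) ^+ u.1 * (-1) ^+ v.1 * ((u.2 == v.2)%:R * (2 ^ n)%:R).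
Proof.
by rewrite /signed_mx -scalemxAl -scalemxAr !mxtraceZ mxtrace_pauliM mulrA.
Qed.

Lemma signed_mx_inj n : injective (@signed_mx n).
Proof.
move=> [b s] [c t] /(congr1 (fun M => \tr (signed_mx (b, s) *m M))).
rewrite !mxtrace_signedM /= eqxx -!signr_addb addbb expr0 !mul1r.
have [<-|_] := eqVneq s t; last first.
  by rewrite mul0r mulr0 => /eqP; rewrite (negbTE (natr_exp2_neq0 n)).
rewrite mul1r -{1}[_%:R]mul1r => /(mulIf (natr_exp2_neq0 n)) /(@signr_inj _ false).
by case: b; case: c.
Qed.

Lemma signed_mx_sq n (u : bool * pstring n) : signed_mx u *m signed_mx u = 1%:M.
Proof.
by rewrite /signed_mx -scalemxAl -scalemxAr pauli_mx_sq scalerA -expr2 sqrr_sign scale1r.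
Qed.

Lemma signed_mx_conj n (s : pstring n) (u : bool * pstring n) :
  pauli_mx s *m signed_mx u *m pauli_mx s = pauli_sign s u.2 *: signed_mx u.
Proof.
by rewrite /signed_mx -scalemxAr -scalemxAl pauli_mx_conj !scalerA mulrC.
Qed.

Lemma scale_signed_mx_inj n (u : bool * pstring n) (c d : algC) :
  c *: signed_mx u = d *: signed_mx u -> c = d.
Proof.
move/(congr1 (fun M => \tr (M *m signed_mx u))).
rewrite -(scalemxAl c) -(scalemxAl d) !mxtraceZ mxtrace_signedM eqxx.
rewrite -expr2 sqrr_sign !mul1r.
exact/mulIf/natr_exp2_neq0.
Qed.

Lemma wt_leq n (s : pstring n) : (wt s <= n)%N.
Proof. by rewrite -[n in (_ <= n)%N]card_ord max_card. Qed.

Lemma wt_sum n (s : pstring n) : wt s = (\sum_(k < n) (s k != ord0))%N.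
Proof.
by rewrite /wt -sum1_card big_mkcond; apply: eq_bigr => k _; rewrite inE; case: ifP.
Qed.

Lemma wt_full n (s : pstring n) : (wt s == n) = [forall k, s k != ord0].
Proof.
apply/idP/forallP => [full k | nz].
  have nzT : [set j | s j != ord0] = setT.
    apply/eqP; rewrite eqEcard subsetT cardsT card_ord.
    exact: eq_leq (esym (eqP full)).
  by have := in_setT k; rewrite -nzT inE.
by rewrite /wt -[n in _ == n]card_ord -cardsT; apply/eqP/eq_card => k; rewrite !inE nz.
Qed.

Lemma wt_pred_indicator n (s : pstring n.+1) :
  ((wt s == n)%:R : algC) = \sum_(j < n.+1) [forall k, (s k == ord0) == (k == j)]%:R.
Proof.
pose Z := [set k | s k == ord0].
have wt_Z : (#|Z| + wt s)%N = n.+1.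
  rewrite -[RHS](card_ord n.+1) -(cardsC Z); congr (_ + _).
  by apply: eq_card => k; rewrite !inE.
have -> : (wt s == n) = (#|Z| == 1%N) by apply/eqP/eqP; lia.
have Z_eq1 j : [forall k, (s k == ord0) == (k == j)] = (Z == [set j]).
  apply/forallP/eqP => [eq_Z | Z_j k].
    by apply/setP => k; rewrite /Z !inE; exact: (eqP (eq_Z k)).
  by rewrite -[k == j]in_set1 -Z_j /Z inE eqxx.
under eq_bigr do rewrite Z_eq1.
case: cards1P => [[j ->]|Z_neq1].
  rewrite (bigD1 j) //= eqxx big1 ?addr0 // => i neq_ij.
  by rewrite (inj_eq set1_inj) eq_sym (negbTE neq_ij).
by rewrite big1 // => j _; case: eqP => // Z_j; case: Z_neq1; exists j.
Qed.

Lemma sum_pauli1_sign_nz b :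
  \sum_(a : 'I_4 | a != ord0) pauli1_sign a b = 3%:R * (- 3%:R^-1) ^+ (b != ord0).
Proof.
rewrite big_mkcond /= !big_ord_recr big_ord0 /=.
by case_I4 b; rewrite /pauli1_sign /=; field.
Qed.

Lemma prod_sum_pauli1_sign_nz n (t : pstring n) :
  \prod_(k < n) \sum_(a : 'I_4 | a != ord0) pauli1_sign a (t k) =
  (3 ^ n)%:R * (- 3%:R^-1) ^+ wt t.
Proof.
under eq_bigr do rewrite sum_pauli1_sign_nz.
by rewrite big_split /= prodr_const card_ord natrX prodrXr -wt_sum.
Qed.

Lemma sum_inv_sign_nz n (t : pstring n) :
  \sum_(j < n) (3%:R * (- 3%:R^-1) ^+ (t j != ord0))^-1 =
  3%:R^-1 * (n%:R - 4%:R * (wt t)%:R) :> algC.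
Proof.
have -> : n%:R = \sum_(j < n) 1 :> algC by rewrite sumr_const card_ord.
rewrite wt_sum natr_sum mulr_sumr -sumrB mulr_sumr.
by apply: eq_bigr => j _; case: (t j != ord0) => /=; field.
Qed.

Lemma sum_pauli_sign_wt_full n (t : pstring n) :
  \sum_(s : pstring n | wt s == n) pauli_sign s t = (3 ^ n)%:R * (- 3%:R^-1) ^+ wt t.
Proof.
rewrite -prod_sum_pauli1_sign_nz.
rewrite (bigA_distr_big_dep (fun _ a => a != ord0) (fun k a => pauli1_sign a (t k))).
by apply: eq_bigl => s; rewrite wt_full; apply/forallP/familyP.
Qed.

Lemma sum_pauli_sign_one_zero n (t : pstring n) j :
  \sum_(s : pstring n | [forall k, (s k == ord0) == (k == j)]) pauli_sign s t =
  \prod_(k < n | k != j) \sum_(a : 'I_4 | a != ord0) pauli1_sign a (t k).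
Proof.
transitivity (\prod_(k < n) \sum_(a : 'I_4 | (a == ord0) == (k == j)) pauli1_sign a (t k)).
  rewrite (bigA_distr_big_dep (fun k a => (a == ord0) == (k == j))).
  by apply: eq_bigl => s; apply/forallP/familyP.
rewrite (bigD1 j) //= eqxx (eq_bigl (pred1 ord0)) => [|a]; last exact: eqb_id.
rewrite big_pred1_eq mul1r; apply: eq_bigr => k /negbTE neq_kj.
by apply: eq_bigl => a; rewrite neq_kj eqbF_neg.
Qed.

(* A string of weight n on n + 1 qubits has its single identity factor at some j. *)
Lemma sum_pauli_sign_wt_pred n (t : pstring n.+1) :
  \sum_(s : pstring n.+1 | wt s == n) pauli_sign s t =
  (3 ^ n)%:R * ((n.+1%:R - 4%:R * (wt t)%:R) * (- 3%:R^-1) ^+ wt t).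
Proof.
rewrite big_mkcond /=.
under eq_bigr do rewrite -mulrb -mulr_natl wt_pred_indicator mulr_suml.
rewrite exchange_big /=.
under eq_bigr do under eq_bigr do rewrite mulr_natl mulrb.
under eq_bigr do rewrite -big_mkcond sum_pauli_sign_one_zero.
pose f k := \sum_(a : 'I_4 | a != ord0) pauli1_sign a (t k).
have f_neq0 k : f k != 0.
  by rewrite /f sum_pauli1_sign_nz mulf_neq0 ?expf_neq0 ?oppr_eq0 ?invr_eq0 ?pnatr_eq0.
have drop_j j : \prod_(k < n.+1 | k != j) f k = (f j)^-1 * \prod_(k < n.+1) f k.
  by rewrite [in RHS](bigD1 j) //= mulKf.
under eq_bigr do rewrite drop_j.
rewrite -mulr_suml prod_sum_pauli1_sign_nz.
under eq_bigr do rewrite /f sum_pauli1_sign_nz.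
rewrite sum_inv_sign_nz expnS natrM.
by field.
Qed.

Section StabilizerCode.
Variables (n k : nat) (S : {set bool * pstring n}).
Hypothesis stabS : is_stabilizer_group k S.

Lemma stab_sign_uniq u v : u \in S -> v \in S -> u.2 = v.2 -> u = v.
Proof.
case: stabS => [[_ _ m1S mulS _] _]; case: u v => [b s] [c t] uS vS /= eq_st.
subst t; have [->//|neq_bc] := eqVneq b c.
have [w wS eq_w] := mulS _ _ uS vS.
suff eq_w_m1 : w = (true, [ffun=> ord0]) by rewrite -eq_w_m1 wS in m1S.
apply: signed_mx_inj; rewrite -eq_w /signed_mx -scalemxAl -scalemxAr pauli_mx_sq.
by rewrite scalerA -signr_addb -negb_eqb neq_bc pauli_mx0.
Qed.

Lemma mxtrace_stabM u v : u \in S -> v \in S ->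
  \tr (signed_mx u *m signed_mx v) = (u == v)%:R * (2 ^ n)%:R.
Proof.
move=> uS vS; rewrite mxtrace_signedM.
have [<-|neq_uv] := eqVneq u v; first by rewrite -expr2 sqrr_sign eqxx !mul1r.
have [eq_uv2|] := eqVneq u.2 v.2; last by rewrite !mul0r mulr0.
by rewrite (stab_sign_uniq uS vS eq_uv2) eqxx in neq_uv.
Qed.

Lemma pauli_sign_stabM s u v w : u \in S -> v \in S ->
  signed_mx w = signed_mx u *m signed_mx v ->
  pauli_sign s w.2 = pauli_sign s u.2 * pauli_sign s v.2.
Proof.
move=> uS vS eq_w; apply: (@scale_signed_mx_inj _ w).
rewrite -signed_mx_conj eq_w -scalerA (scalemxAr (pauli_sign s v.2)).
rewrite (scalemxAl (pauli_sign s u.2)) -!signed_mx_conj !mulmxA.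
by rewrite -(mulmxA _ (pauli_mx s) (pauli_mx s)) pauli_mx_sq mulmx1.
Qed.

(* Right multiplication by v permutes S and flips the sign of every summand. *)
Lemma sum_pauli_sign_stab_eq0 s v : v \in S -> pauli_sign s v.2 = -1 ->
  \sum_(u in S) pauli_sign s u.2 = 0.
Proof.
case: stabS => [[_ _ _ mulS _] _] vS sign_v.
pose mulv u := odflt u [pick w in S | signed_mx w == signed_mx u *m signed_mx v].
have mulvP u :
    u \in S -> mulv u \in S /\ signed_mx (mulv u) = signed_mx u *m signed_mx v.
  move=> uS; rewrite /mulv; case: pickP => [w /andP[wS /eqP] //|none].
  by have [w wS eq_w] := mulS _ _ uS vS; move: (none w); rewrite wS eq_w eqxx.
have mulv_inj : {in S &, injective mulv}.
  move=> u u' uS u'S /(congr1 (fun w => signed_mx w *m signed_mx v)) /=.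
  rewrite (mulvP _ uS).2 (mulvP _ u'S).2 -!mulmxA signed_mx_sq !mulmx1.
  exact: signed_mx_inj.
have mulvS : mulv @: S = S.
  apply/eqP; rewrite eqEcard (card_in_imset mulv_inj) leqnn andbT.
  by apply/subsetP => _ /imsetP[u uS ->]; case: (mulvP _ uS).
have : \sum_(u in S) pauli_sign s u.2 = - \sum_(u in S) pauli_sign s u.2.
  rewrite -[in LHS]mulvS big_imset //= -sumrN; apply: eq_bigr => u uS.
  by rewrite (pauli_sign_stabM s uS vS (mulvP _ uS).2) sign_v mulrN1.
by move/eqP; rewrite -subr_eq0 opprK -mulr2n mulrn_eq0 orFb => /eqP.
Qed.

Lemma sum_pauli_sign_stab_ge0 s : 0 <= \sum_(u in S) pauli_sign s u.2.
Proof.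
have [sign1|] := boolP [forall u in S, pauli_sign s u.2 == 1].
  rewrite (eq_bigr (fun=> 1)) => [|u /(forall_inP sign1)/eqP //].
  by rewrite sumr_const ler0n.
rewrite negb_forall_in => /exists_inP[v vS /negPf sign_v].
have /eqP := pauli_sign_sqr s v.2; rewrite sqrf_eq1 sign_v => /eqP sign_v'.
by rewrite (sum_pauli_sign_stab_eq0 vS sign_v').
Qed.

Let P := code_projector k S.
Let c := ((2 ^ (n - k))%:R)^-1 : algC.

Lemma code_scale_exp2 : c * (2 ^ n)%:R = (2 ^ k)%:R.
Proof.
case: stabS => [[le_kn _ _ _ _] _].
have -> : (2 ^ n = 2 ^ (n - k) * 2 ^ k)%N by rewrite -expnD subnK.
by rewrite natrM mulKf ?natr_exp2_neq0.
Qed.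

Lemma mxtrace_pauli_code s :
  \tr (pauli_mx s *m P) = (2 ^ k)%:R * \sum_(u in S) (-1) ^+ u.1 * (s == u.2)%:R.
Proof.
rewrite /P /code_projector -scalemxAr mxtraceZ mulmx_sumr raddf_sum /=.
rewrite -code_scale_exp2 -mulrA; congr (_ * _); rewrite mulr_sumr.
apply: eq_bigr => u _.
by rewrite /signed_mx -(scalemxAr ((-1) ^+ u.1)) mxtraceZ mxtrace_pauliM mulrA mulrC.
Qed.

Lemma sum_stab_at (F : bool * pstring n -> algC) s :
  \sum_(u in S) F u * (s == u.2)%:R =
  if [pick u in S | u.2 == s] is Some u then F u else 0.
Proof.
case: pickP => [u0 /andP[u0S /eqP eq_s]|none]; last first.
  by apply: big1 => u uS; move: (none u); rewrite uS eq_sym /= => ->; rewrite mulr0.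
rewrite (bigD1 u0) //= eq_s eqxx mulr1 big1 ?addr0 // => u /andP[uS neq_u].
have [eq_su|] := eqVneq s u.2; last by rewrite mulr0.
by rewrite (stab_sign_uniq uS u0S) ?eqxx // -eq_su in neq_u.
Qed.

Lemma sqr_sum_stab_sign s :
  (\sum_(u in S) (-1) ^+ u.1 * (s == u.2)%:R) ^+ 2 =
  \sum_(u in S) (s == u.2)%:R :> algC.
Proof.
rewrite [RHS](eq_bigr (fun u => 1 * (s == u.2)%:R)) => [|u _]; last by rewrite mul1r.
by rewrite !sum_stab_at; case: pickP => [u _|_]; rewrite ?sqrr_sign ?expr0n.
Qed.

Lemma SL_A_stab i : SL_A k P i = \sum_(u in S) (wt u.2 == i)%:R.
Proof.
rewrite /SL_A; under eq_bigr do rewrite adjmx_pauli mxtrace_pauli_code -expr2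
  exprMn sqr_sum_stab_sign.
rewrite -mulr_sumr mulrA -natrX -expnM mulnC mulVf ?mul1r ?natr_exp2_neq0 //.
rewrite exchange_big /=; apply: eq_bigr => u _.
rewrite big_mkcond (bigD1 u.2) //= eqxx big1 ?addr0 => [|s neq_s]; last first.
  by rewrite eq_sym (negbTE neq_s) if_same.
by case: (_ == _).
Qed.

Lemma pauli_conj_code s :
  pauli_mx s *m P *m pauli_mx s = c *: \sum_(u in S) pauli_sign s u.2 *: signed_mx u.
Proof.
rewrite /P /code_projector -scalemxAr -scalemxAl mulmx_sumr mulmx_suml.
by congr (_ *: _); apply: eq_bigr => u _; rewrite signed_mx_conj.
Qed.

Lemma mxtrace_pauli_conj_code s :
  \tr (pauli_mx s *m P *m adjmx (pauli_mx s) *m P) =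
  c * (2 ^ k)%:R * \sum_(u in S) pauli_sign s u.2.
Proof.
rewrite adjmx_pauli pauli_conj_code /P /code_projector -scalemxAl -scalemxAr.
rewrite !mxtraceZ -code_scale_exp2 -!mulrA; congr (_ * (_ * _)).
rewrite mulmx_suml raddf_sum mulr_sumr; apply: eq_bigr => u uS /=.
rewrite -(scalemxAl (pauli_sign s u.2)) mxtraceZ mulmx_sumr raddf_sum /=.
rewrite (bigD1 u) //= mxtrace_stabM // eqxx big1 ?addr0 => [|v /andP[vS neq_vu]].
  by rewrite mul1r mulrC.
by rewrite mxtrace_stabM // eq_sym (negbTE neq_vu) mul0r.
Qed.

Lemma SL_B_stab j :
  SL_B k P j = c * \sum_(s : pstring n | wt s == j) \sum_(u in S) pauli_sign s u.2.
Proof.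
rewrite /SL_B; under eq_bigr do rewrite mxtrace_pauli_conj_code.
by rewrite -mulr_sumr mulrCA -mulrA mulVKf ?natr_exp2_neq0.
Qed.

Lemma stab_wt_even : (forall i, SL_A k P i.*2.+1 = 0) ->
  forall u, u \in S -> ~~ odd (wt u.2).
Proof.
move=> A_odd0 u uS; apply/negP => odd_wt; have := A_odd0 (wt u.2)./2.
have -> : ((wt u.2)./2.*2.+1 = wt u.2)%N by rewrite -[RHS]odd_double_half odd_wt.
rewrite SL_A_stab.
move/(psumr_eq0P (fun v _ => ler0n _ _))/(_ u uS).
by rewrite eqxx => /eqP; rewrite oner_eq0.
Qed.

Lemma SL_A_wt_moment :
  \sum_(i < n.+1) i%:R * ((3 ^ i)%:R)^-1 * SL_A k P i =
  \sum_(u in S) (wt u.2)%:R * 3%:R^-1 ^+ wt u.2.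
Proof.
under eq_bigr do rewrite SL_A_stab mulr_sumr.
rewrite exchange_big /=; apply: eq_bigr => u _.
rewrite (bigD1 (Ordinal (wt_leq u.2 : wt u.2 < n.+1)%N)) //= eqxx mulr1 natrX exprVn.
by rewrite big1 ?addr0 // => i; rewrite -val_eqE /= eq_sym => /negbTE->; rewrite mulr0.
Qed.

Lemma SL_B_full_wt :
  SL_B k P n = c * (3 ^ n)%:R * \sum_(u in S) (- 3%:R^-1) ^+ wt u.2.
Proof.
rewrite SL_B_stab exchange_big /= -mulrA; congr (_ * _).
by rewrite mulr_sumr; apply: eq_bigr => u _; rewrite sum_pauli_sign_wt_full.
Qed.

End StabilizerCode.

Lemma stab_wt_moment_le n k (S : {set bool * pstring n}) :
  is_stabilizer_group k S ->
  4%:R * \sum_(u in S) (wt u.2)%:R * (- 3%:R^-1) ^+ wt u.2 <=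
  n%:R * \sum_(u in S) (- 3%:R^-1) ^+ wt u.2 :> algC.
Proof.
case: n S => [|n] S stabS; rewrite -subr_ge0 !mulr_sumr -sumrB.
  rewrite big1 // => u _; move: (wt_leq u.2); rewrite leqn0 => /eqP->.
  by rewrite !mul0r mulr0 subr0.
have : 0 <= \sum_(s : pstring n.+1 | wt s == n) \sum_(u in S) pauli_sign s u.2.
  by apply: sumr_ge0 => s _; apply: (sum_pauli_sign_stab_ge0 stabS).
rewrite exchange_big /=; under eq_bigr do rewrite sum_pauli_sign_wt_pred.
rewrite -mulr_sumr pmulr_rge0 ?ltr0n ?expn_gt0 //.
by under eq_bigr do rewrite mulrA -mulrBl.
Qed.

Theorem proposition7 (n k : nat) (S : {set bool * pstring n}) :
  is_stabilizer_group k S ->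
  (forall i : nat, SL_A k (code_projector k S) i.*2.+1 = 0) ->
  \sum_(i < n.+1) (i%:R * ((3 ^ i)%:R)^-1 * SL_A k (code_projector k S) i)
    <= n%:R / 4%:R * ((2 ^ (n - k))%:R / (3 ^ n)%:R)
       * SL_B k (code_projector k S) n.
Proof.
move=> stabS A_odd0.
have sign_wt u : u \in S -> (- 3%:R^-1) ^+ wt u.2 = 3%:R^-1 ^+ wt u.2 :> algC.
  move/(stab_wt_even stabS A_odd0)/negbTE => even_wt.
  by rewrite exprNn -signr_odd even_wt mul1r.
rewrite (SL_A_wt_moment stabS) (SL_B_full_wt stabS) (eq_bigr _ sign_wt).
have := stab_wt_moment_le stabS; rewrite (eq_bigr _ sign_wt).
under [X in 4%:R * X]eq_bigr => u uS do rewrite sign_wt //.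
set B := \sum_(u in S) 3%:R^-1 ^+ _.
have -> : n%:R / 4%:R * ((2 ^ (n - k))%:R / (3 ^ n)%:R) *
    ((2 ^ (n - k))%:R^-1 * (3 ^ n)%:R * B) = 4%:R^-1 * (n%:R * B).
  by field; rewrite natr_exp2_neq0 pnatr_eq0 expn_eq0.
by rewrite ler_pdivlMl ?ltr0n.
Qed.
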